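(* Let $Q$ be a complete quiver with exactly two frozen vertices, and let $j$ be a mutable vertex which is cycle-preserving for $Q$ and is not the apex of a vortex in $Q$. Then $\mu_j(Q)$ is a brog quiver.
   Context: A quiver is a finite directed multigraph with no loops and no oriented 2-cycles, whose vertex set is partitioned into mutable and frozen vertices; arrows between two frozen vertices are ignored. $b_{ik}$ = number of arrows $i\to k$ minus number of arrows $k\to i$; $Q|_S$ is the induced subquiver on $S$. Mutation $\mu_j$ at mutable $j$: for each path $i\to j\to k$ add $b_{ij}b_{jk}$ arrows $i\to k$, reverse all arrows at $j$, cancel 2-cycles. Complete: at least one arrow between every pair of vertices at least one of which is mutable. A 3-vertex (sub)quiver is an oriented 3-cycle if it has at most one frozen vertex and its underlying directed graph is not acyclic. A mutable vertex $j$ is cycle-preserving for $Q$ if whenever $Q|_{\{i,j,k\}}$ is an oriented 3-cycle containing $j$, so is $\mu_j(Q)|_{\{i,j,k\}}$. A vortex is a quiver on four vertices, at least three mutable, in which one vertex (the apex) is a source or sink and the other three support an oriented cycle; $j$ is the apex of a vortex in $Q$ if it is the apex of some 4-vertex induced subquiver that is a vortex. A mutable vertex adjacent to at least one frozen vertex is red (resp. green) if all arrows between it and frozen vertices point towards (resp. away from) it. Two mutable vertices $i,j$ are complementary if for every frozen vertex $u$ with $b_{iu}\ne0$ and $b_{ju}\ne0$, $b_{iu}$ and $b_{ju}$ have opposite signs. A quiver is brog if its mutable vertices can be coloured blue, red, orange and green such that: (1) the vertices coloured red are exactly the red vertices; (2) the vertices coloured green are exactly the green vertices; (3) each blue vertex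 $i$ has $b_{ij}\ge0$ for every red $j$ and $b_{ij}\le0$ for every green $j$; (4) each orange vertex $i$ has $b_{ij}\ge0$ for every green $j$ and $b_{ij}\le0$ for every red $j$; (5) every blue vertex and every orange vertex are complementary. *)

(* A quiver with no loops and no oriented 2-cycles is encoded
   by its skew-symmetric integer exchange matrix  B i k = b_ik  on a finite
   vertex type V, together with the set F of frozen vertices. *)
From mathcomp Require Import all_boot all_order all_algebra.
Set Implicit Arguments. Unset Strict Implicit. Unset Printing Implicit Defensive.
Import Order.TTheory GRing.Theory Num.Theory.
Local Open Scope ring_scope.

Section Quivers.
Variable V : finType.
Implicit Types (B : V -> V -> int) (F : {set V}).

(* B is the exchange matrix of a quiver: b_ik = #(i->k) - #(k->i). *)
Definition qskew B := forall i k, B i k = - B k i.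

Definition mutable F (v : V) := v \notin F.

(* Mutation at j: for each path i -> j -> k add b_ij b_jk arrows i -> k,
   reverse all arrows at j, cancel 2-cycles. *)
Definition mutate (j : V) B : V -> V -> int := fun i k =>
  if (i == j) || (k == j) then - B i k
  else B i k +
       (if (0 < B i j) && (0 < B j k) then B i j * B j k
        else if (B i j < 0) && (B j k < 0) then - (B i j * B j k)
        else 0).

Definition qcomplete B F :=
  forall i k, i != k -> (i \notin F) || (k \notin F) -> B i k != 0.

Definition dcycle3 B (x y z : V) := [&& 0 < B x y, 0 < B y z & 0 < B z x].

(* The induced subquiver on {a,b,c} (three distinct vertices) is an oriented
   3-cycle: at most one frozen vertex and its underlying directed graph is not
   acyclic (for a 3-vertex digraph without loops/2-cycles this means it
   contains a directed 3-cycle in one of the two cyclic orientations). *)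
Definition oriented3 B F (a b c : V) :=
  [&& uniq [:: a; b; c],
      (#|F :&: [set a; b; c]| <= 1)%N
    & (dcycle3 B a b c || dcycle3 B a c b)].

Definition cycle_preserving B F (j : V) :=
  mutable F j /\
  forall i k, oriented3 B F i j k -> oriented3 (mutate j B) F i j k.

Definition vortex_apex B F (j : V) :=
  exists a b c : V,
    [/\ uniq [:: j; a; b; c],
        (#|F :&: [set j; a; b; c]| <= 1)%N,
        (forall x, x \in [:: a; b; c] -> B x j <= 0) \/
        (forall x, x \in [:: a; b; c] -> B j x <= 0)
      & dcycle3 B a b c \/ dcycle3 B a c b].

Definition has_frozen_nbr B F (v : V) := exists u, u \in F /\ B v u != 0.

Definition is_red B F (v : V) :=
  [/\ mutable F v, has_frozen_nbr B F v & forall u, u \in F -> B u v >= 0].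
Definition is_green B F (v : V) :=
  [/\ mutable F v, has_frozen_nbr B F v & forall u, u \in F -> B v u >= 0].

Definition complementary B F (i j : V) :=
  forall u, u \in F -> B i u != 0 -> B j u != 0 -> B i u * B j u < 0.

Inductive colour := Blue | Red | Orange | Green.

Definition brog B F :=
  exists col : V -> colour,
  [/\ forall v, mutable F v -> (col v = Red <-> is_red B F v),
      forall v, mutable F v -> (col v = Green <-> is_green B F v),
      forall i, mutable F i -> col i = Blue ->
        forall j, mutable F j ->
          (col j = Red -> 0 <= B i j) /\ (col j = Green -> B i j <= 0),
      forall i, mutable F i -> col i = Orange ->
        forall j, mutable F j ->
          (col j = Green -> 0 <= B i j) /\ (col j = Red -> B i j <= 0)
    & forall i k, mutable F i -> mutable F k -> col i = Blue -> col k = Orange ->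
        complementary B F i k].

End Quivers.

From mathcomp Require Import all_boot all_order all_algebra zify.
Import Order.TTheory GRing.Theory Num.Theory.
Set Implicit Arguments. Unset Strict Implicit. Unset Printing Implicit Defensive.
Local Open Scope ring_scope.

(* Since j is cycle-preserving, in mu_j(Q) every path y -> j -> x with a mutable
   end is closed by an arrow x -> y; since j is no vortex apex, and mutation at j
   does not touch arrows between two in- or two out-neighbours of j, no oriented
   3-cycle of mu_j(Q) lies on one side of j.  Together these forbid oriented
   3-cycles avoiding j with two mutable vertices.  With two frozen vertices, a
   mutable vertex that is neither red nor green has exactly one frozen in- and
   one frozen out-neighbour; colouring these vertices blue, except j which is
   orange, each brog condition reduces to one of the two facts above. *)

Section SkewMatrix.
Variables (V : finType) (B : V -> V -> int).
Hypothesis skB : qskew B.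

Lemma qskew_diag x : B x x = 0.
Proof. by have := skB x x; lia. Qed.

Lemma qskew_gt0 x y : (0 < B x y) = (B y x < 0).
Proof. by rewrite skB oppr_gt0. Qed.

Lemma qskew_gt0_neq x y : 0 < B x y -> x != y.
Proof. by apply: contraTneq => ->; rewrite qskew_diag. Qed.

Lemma qskew_gt0_asym x y : 0 < B x y -> 0 < B y x -> False.
Proof. by rewrite qskew_gt0; lia. Qed.

Lemma qskew_nz_gt0 x y : B x y != 0 -> 0 < B x y \/ 0 < B y x.
Proof. by rewrite (qskew_gt0 y); lia. Qed.

Lemma qcomplete_side (F : {set V}) (j v : V) :
  qcomplete B F -> j \notin F -> v != j -> 0 < B v j \/ 0 < B j v.
Proof. by move=> complB jF vj; apply/qskew_nz_gt0/complB; rewrite // jF orbT. Qed.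

End SkewMatrix.

Section Mutation.
Variables (V : finType) (B : V -> V -> int) (j : V).
Hypothesis skB : qskew B.

Lemma qskew_mutate : qskew (mutate j B).
Proof.
move=> i k; rewrite /mutate [(k == j) || _]orbC.
case: ifP => _; first by rewrite (skB i k) opprK.
rewrite (skB k i) (skB k j) (skB j i) mulrNN [B j k * _]mulrC !oppr_gt0 !oppr_lt0.
have [ha|ha|ha] := ltrgtP 0 (B i j); have [hb|hb|hb] := ltrgtP 0 (B j k) => /=;
  rewrite ?ha ?hb /=; lia.
Qed.

Lemma mutate_jl y : mutate j B j y = - B j y.
Proof. by rewrite /mutate eqxx. Qed.

Lemma mutate_jr x : mutate j B x j = - B x j.
Proof. by rewrite /mutate eqxx orbT. Qed.

Lemma mutate_in x y : 0 < B x j -> 0 < B y j -> mutate j B x y = B x y.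
Proof.
move=> hx hy; rewrite /mutate (negbTE (qskew_gt0_neq skB hx)).
rewrite (negbTE (qskew_gt0_neq skB hy)) /=.
rewrite (qskew_gt0 skB y) in hy.
by rewrite (lt_gtF hy) (lt_gtF hx) !andbF addr0.
Qed.

Lemma mutate_out x y : 0 < B j x -> 0 < B j y -> mutate j B x y = B x y.
Proof.
move=> hx hy; rewrite /mutate eq_sym (negbTE (qskew_gt0_neq skB hx)).
rewrite eq_sym (negbTE (qskew_gt0_neq skB hy)) /=.
rewrite (qskew_gt0 skB j x) in hx.
by rewrite (lt_gtF hy) (lt_gtF hx) !andbF addr0.
Qed.

Lemma mutate_path_gt0 x y :
  0 < B x j -> 0 < B j y -> 0 < B x y -> 0 < mutate j B x y.
Proof.
move=> hx hy hxy; rewrite /mutate (negbTE (qskew_gt0_neq skB hx)) eq_sym.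
rewrite (negbTE (qskew_gt0_neq skB hy)) /= hx hy /=.
by rewrite addr_gt0 ?mulr_gt0.
Qed.

Lemma mutate_jl_gt0 x : (0 < mutate j B j x) = (0 < B x j).
Proof. by rewrite mutate_jl oppr_gt0 -qskew_gt0. Qed.

Lemma mutate_jr_gt0 x : (0 < mutate j B x j) = (0 < B j x).
Proof. by rewrite mutate_jr oppr_gt0 -qskew_gt0. Qed.

End Mutation.

Definition on_one_side (V : finType) (B : V -> V -> int) (j a b c : V) :=
  [/\ 0 < B a j, 0 < B b j & 0 < B c j] \/ [/\ 0 < B j a, 0 < B j b & 0 < B j c].

Lemma cardI_le1 (T : finType) (A S : {set T}) (w : T) :
  (forall z, z \in A -> z \in S -> z = w) -> (#|A :&: S| <= 1)%N.
Proof.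
move=> Aw; rewrite -(cards1 w) subset_leq_card //.
by apply/subsetP => z /setIP[zA zS]; rewrite inE (Aw z zA zS).
Qed.

Section CyclePreservingMutation.
Variables (V : finType) (B : V -> V -> int) (F : {set V}) (j : V).
Hypotheses (skB : qskew B) (complB : qcomplete B F) (jF : j \notin F).

Lemma oriented3_path x y : (x \notin F) || (y \notin F) ->
  0 < B x j -> 0 < B j y -> 0 < B y x -> oriented3 B F x j y.
Proof.
move=> xyF hx hy hyx; apply/and3P; split.
- rewrite /= !inE negb_or (qskew_gt0_neq skB hx) (qskew_gt0_neq skB hy) andbT.
  by rewrite eq_sym (qskew_gt0_neq skB hyx).
- case/orP: xyF => [xF|yF]; [apply: (@cardI_le1 _ _ _ y) | apply: (@cardI_le1 _ _ _ x)];
    move=> z zF; rewrite !inE => /orP[/orP[]|] /eqP ez //;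
    by move: zF; rewrite ez ?(negbTE xF) ?(negbTE yF) ?(negbTE jF).
- by rewrite /dcycle3 hx hy hyx.
Qed.

Hypothesis cpj : forall x y, oriented3 B F x j y -> oriented3 (mutate j B) F x j y.

(* Unless x -> y already, x -> j -> y -> x is a 3-cycle, which must survive mutation. *)
Lemma cycle_preserving_path_gt0 x y : (x \notin F) || (y \notin F) ->
  0 < B x j -> 0 < B j y -> 0 < mutate j B x y.
Proof.
move=> xyF hx hy.
have xy : x != y by apply: contraTneq hx => ->; rewrite (qskew_gt0 skB) -leNgt ltW.
have [hxy|hyx] := qskew_nz_gt0 skB (complB xy xyF); first exact: mutate_path_gt0.
have /cpj/and3P[_ _ /orP[]] := oriented3_path xyF hx hy hyx; case/and3P => //.
by rewrite mutate_jr oppr_gt0 ltNge (ltW hx).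
Qed.

Lemma mutate_path_closes x y : (x \notin F) || (y \notin F) ->
  0 < mutate j B y j -> 0 < mutate j B j x -> 0 < mutate j B x y.
Proof.
by rewrite mutate_jr_gt0 // mutate_jl_gt0 // => xyF hy hx; apply: cycle_preserving_path_gt0.
Qed.

Lemma qcomplete_mutate : qcomplete (mutate j B) F.
Proof.
move=> x y xy xyF.
have [exj|xj] := eqVneq x j; first by rewrite exj mutate_jl oppr_eq0 complB -?exj.
have [eyj|yj] := eqVneq y j; first by rewrite eyj mutate_jr oppr_eq0 complB -?eyj.
have skC := qskew_mutate j skB.
have [hx|hx] := qcomplete_side skB complB jF xj;
  have [hy|hy] := qcomplete_side skB complB jF yj.
- by rewrite mutate_in // complB.
- by rewrite gt_eqF // cycle_preserving_path_gt0.
- by rewrite skC oppr_eq0 gt_eqF // cycle_preserving_path_gt0 // orbC.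
- by rewrite mutate_out // complB.
Qed.

Lemma vortex_apex_of_cycle a b c : a \notin F -> b \notin F ->
  on_one_side B j a b c -> dcycle3 B a b c -> vortex_apex B F j.
Proof.
move=> aF bF side abc; have neq := qskew_gt0_neq skB.
have [ja jb jc] : [/\ j != a, j != b & j != c].
  by case: side => -[/neq ? /neq ? /neq ?]; split; rewrite // eq_sym.
exists a, b, c; split; last by left.
- case/and3P: abc => /neq ab /neq bc /neq ca.
  by rewrite /= !inE !negb_or ja jb jc ab bc (eq_sym a c) ca.
- apply: (@cardI_le1 _ _ _ c) => z zF; rewrite !inE => /orP[/orP[/orP[]|]|] /eqP ez //;
    by move: zF; rewrite ez ?(negbTE aF) ?(negbTE bF) ?(negbTE jF).
- case: side => -[ha hb hc]; [right | left] => x; rewrite !inE => /or3P[] /eqP->;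
    by rewrite skB oppr_le0 ltW.
Qed.

Lemma mutate_no_one_sided_cycle a b c : ~ vortex_apex B F j ->
  a \notin F -> b \notin F -> on_one_side (mutate j B) j a b c ->
  ~~ dcycle3 (mutate j B) a b c.
Proof.
move=> nvj aF bF side; apply/negP => abc; apply: nvj.
case: side => -[]; rewrite ?mutate_jr_gt0 ?mutate_jl_gt0 // => ha hb hc;
  apply: (vortex_apex_of_cycle (c := c) aF bF); rewrite /on_one_side ?ha ?hb ?hc.
- by right; split.
- by move: abc; rewrite /dcycle3 !mutate_out.
- by left; split.
- by move: abc; rewrite /dcycle3 !mutate_in.
Qed.

End CyclePreservingMutation.

Lemma mem_card2 (T : finType) (A : {set T}) (a b u : T) : #|A| = 2%N ->
  a \in A -> b \in A -> a != b -> u \in A -> u = a \/ u = b.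
Proof.
move=> A2 aA bA ab; suff <- : [set a; b] = A by rewrite !inE => /orP[] /eqP; auto.
apply/eqP; rewrite eqEcard cards2 ab A2 andbT.
by apply/subsetP => x; rewrite !inE => /orP[] /eqP->.
Qed.

Section BrogCriterion.
Variables (V : finType) (C : V -> V -> int) (F : {set V}) (j : V).
Hypotheses (skC : qskew C) (complC : qcomplete C F) (jF : j \notin F) (F2 : #|F| = 2%N).
Hypothesis path_closes : forall x y, (x \notin F) || (y \notin F) ->
  0 < C y j -> 0 < C j x -> 0 < C x y.
Hypothesis no_one_sided_cycle : forall a b c, a \notin F -> b \notin F ->
  on_one_side C j a b c -> ~~ dcycle3 C a b c.

Lemma frozen_nonempty : exists u, u \in F.
Proof. by apply/card_gt0P; rewrite F2. Qed.

Lemma frozen_neq_j u : u \in F -> u != j.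
Proof. by apply: contraTneq => ->. Qed.

Lemma frozen_nbr_nz u v : u \in F -> v \notin F -> C u v != 0.
Proof.
by move=> uF vF; apply: complC; [apply: contraNneq vF => <- | rewrite vF orbT].
Qed.

Lemma in_out_edgeF x y : (x \notin F) || (y \notin F) ->
  0 < C x j -> 0 < C j y -> 0 < C x y -> False.
Proof.
by move=> xyF hx hy; apply/qskew_gt0_asym/path_closes => //; rewrite orbC.
Qed.

(* A 3-cycle not on one side of j has an arrow from an in-neighbour to an
   out-neighbour of j, which [path_closes] reverses. *)
Lemma no_cycle_off_j a b c : a \notin F -> b \notin F ->
  a != j -> b != j -> c != j -> ~~ dcycle3 C a b c.
Proof.
move=> aF bF aj bj cj; apply/negP => abc; case/and3P: (abc) => hab hbc hca.
have abF : (a \notin F) || (b \notin F) by rewrite aF.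
have bcF : (b \notin F) || (c \notin F) by rewrite bF.
have caF : (c \notin F) || (a \notin F) by rewrite aF orbT.
have side := qcomplete_side skC complC jF.
have [ha|ha] := side a aj; have [hb|hb] := side b bj; have [hc|hc] := side c cj;
  try by [exact: in_out_edgeF abF ha hb hab | exact: in_out_edgeF bcF hb hc hbc
         | exact: in_out_edgeF caF hc ha hca].
- by move: abc; apply/negP/no_one_sided_cycle => //; left.
- by move: abc; apply/negP/no_one_sided_cycle => //; right.
Qed.

Definition redb v := [forall u in F, 0 < C u v].
Definition greenb v := [forall u in F, 0 < C v u].

Lemma is_redP v : v \notin F -> is_red C F v <-> redb v.
Proof.
move=> vF; have [u uF] := frozen_nonempty.
split=> [[_ _ hF] | /forall_inP hF].
- by apply/forall_inP => w wF; rewrite lt_def hF // andbT frozen_nbr_nz.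
- by split=> // [|w /hF/ltW //]; exists u; rewrite skC oppr_eq0 frozen_nbr_nz.
Qed.

Lemma is_greenP v : v \notin F -> is_green C F v <-> greenb v.
Proof.
move=> vF; have [u uF] := frozen_nonempty.
split=> [[_ _ hF] | /forall_inP hF].
- by apply/forall_inP => w wF; rewrite lt_def hF // andbT skC oppr_eq0 frozen_nbr_nz.
- by split=> // [|w /hF/ltW //]; exists u; rewrite skC oppr_eq0 frozen_nbr_nz.
Qed.

Lemma not_redP v : v \notin F -> ~~ redb v -> exists2 u, u \in F & 0 < C v u.
Proof.
move=> vF /forall_inPn[u uF hu]; exists u => //.
by case: (qskew_nz_gt0 skC (frozen_nbr_nz uF vF)) => // h; rewrite h in hu.
Qed.

Lemma not_greenP v : v \notin F -> ~~ greenb v -> exists2 u, u \in F & 0 < C u v.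
Proof.
move=> vF /forall_inPn[u uF hu]; exists u => //.
have nz : C v u != 0 by rewrite skC oppr_eq0 frozen_nbr_nz.
by case: (qskew_nz_gt0 skC nz) => // h; rewrite h in hu.
Qed.

Lemma redb_greenbF v : redb v -> greenb v -> False.
Proof.
have [u uF] := frozen_nonempty.
by move=> /forall_inP/(_ u uF) + /forall_inP/(_ u uF); apply: qskew_gt0_asym.
Qed.

Lemma blue_red_ge0 i r : i \notin F -> i != j -> ~~ redb i -> ~~ greenb i ->
  r \notin F -> redb r -> 0 <= C i r.
Proof.
move=> iF ij nri ngi rF /forall_inP rr; rewrite skC oppr_ge0 leNgt.
apply/negP => hri; have [erj|rj] := eqVneq r j.
  apply: (negP ngi); apply/forall_inP => u uF.
  by apply: path_closes; rewrite ?iF -?erj ?rr.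
have [u uF hu] := not_redP iF nri.
have := no_cycle_off_j rF iF rj ij (frozen_neq_j uF).
by rewrite /dcycle3 hri hu rr.
Qed.

Lemma blue_green_le0 i g : i \notin F -> i != j -> ~~ redb i -> ~~ greenb i ->
  g \notin F -> greenb g -> C i g <= 0.
Proof.
move=> iF ij nri ngi gF /forall_inP gg; rewrite leNgt.
apply/negP => hig; have [egj|gj] := eqVneq g j.
  apply: (negP nri); apply/forall_inP => u uF.
  by apply: path_closes; rewrite ?iF ?orbT -?egj ?gg.
have [u uF hu] := not_greenP iF ngi.
have := no_cycle_off_j iF gF ij gj (frozen_neq_j uF).
by rewrite /dcycle3 hig hu gg.
Qed.

Lemma orange_red_le0 r : ~~ greenb j -> r \notin F -> redb r -> C j r <= 0.
Proof.
move=> ngj rF /forall_inP rr; rewrite leNgt; apply/negP => hjr.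
have [u uF hu] := not_greenP jF ngj.
by apply: (qskew_gt0_asym skC (rr u uF)); apply: path_closes; rewrite ?rF.
Qed.

Lemma orange_green_ge0 g : ~~ redb j -> g \notin F -> greenb g -> 0 <= C j g.
Proof.
move=> nrj gF /forall_inP gg; rewrite skC oppr_ge0 leNgt; apply/negP => hgj.
have [u uF hu] := not_redP jF nrj.
by apply: (qskew_gt0_asym skC (gg u uF)); apply: path_closes; rewrite ?gF ?orbT.
Qed.

Lemma mixed_frozen_sign v a b : v \notin F -> ~~ redb v -> ~~ greenb v ->
  a \in F -> b \in F -> a != b -> (0 < C v a) = (0 < C b v).
Proof.
move=> vF nrv ngv aF bF ab.
have [u uF hu] := not_redP vF nrv; have [w wF hw] := not_greenP vF ngv.
have asym := qskew_gt0_asym skC.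
case: (mem_card2 F2 aF bF ab uF) => eu; case: (mem_card2 F2 aF bF ab wF) => ew;
  subst u w.
- by case: (asym _ _ hu hw).
- by rewrite hu hw.
- by rewrite !(qskew_gt0 skC) (lt_gtF hw) (lt_gtF hu).
- by case: (asym _ _ hu hw).
Qed.

Lemma blue_orange_complementary i : i \notin F -> i != j ->
  ~~ redb i -> ~~ greenb i -> ~~ redb j -> ~~ greenb j -> complementary C F i j.
Proof.
move=> iF ij nri ngi nrj ngj.
have [a aF hja] := not_redP jF nrj; have [b bF hbj] := not_greenP jF ngj.
have ab : a != b by apply: contraTneq hbj => <-; rewrite -leNgt skC oppr_le0 ltW.
have hib : 0 < C i b.
  have [hi|hi] := qcomplete_side skC complC jF ij.
  - rewrite (mixed_frozen_sign iF nri ngi bF aF) 1?eq_sym //.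
    by apply: path_closes; rewrite ?iF ?orbT.
  - by apply: path_closes; rewrite ?iF.
have hia : C i a < 0.
  have [hai|hia] := qskew_nz_gt0 skC (frozen_nbr_nz aF iF); first by rewrite skC oppr_lt0.
  rewrite (mixed_frozen_sign iF nri ngi aF bF ab) in hia.
  by case: (qskew_gt0_asym skC hib hia).
move=> u uF _ _; case: (mem_card2 F2 aF bF ab uF) => ->.
- by rewrite pmulr_llt0.
- by rewrite pmulr_rlt0 // skC oppr_lt0.
Qed.

Definition brog_colour v : colour :=
  if redb v then Red else if greenb v then Green
  else if v == j then Orange else Blue.

Lemma brog_colour_Red v : brog_colour v = Red -> redb v.
Proof. by rewrite /brog_colour; case: (redb v); case: (greenb v); case: (v == j). Qed.

Lemma brog_colour_Green v : brog_colour v = Green -> greenb v.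
Proof. by rewrite /brog_colour; case: (redb v); case: (greenb v); case: (v == j). Qed.

Lemma brog_colour_Blue v :
  brog_colour v = Blue -> [/\ ~~ redb v, ~~ greenb v & v != j].
Proof. by rewrite /brog_colour; case: (redb v); case: (greenb v); case: (v == j). Qed.

Lemma brog_colour_Orange v :
  brog_colour v = Orange -> [/\ ~~ redb v, ~~ greenb v & v = j].
Proof.
by rewrite /brog_colour; case: (redb v); case: (greenb v); case: (v =P j).
Qed.

Theorem brog_criterion : brog C F.
Proof.
exists brog_colour; split.
- move=> v vF; rewrite is_redP //; split; first exact: brog_colour_Red.
  by rewrite /brog_colour => ->.
- move=> v vF; rewrite is_greenP //; split; first exact: brog_colour_Green.
  move=> gv; rewrite /brog_colour gv; case: ifP => // rv.
  by case: (redb_greenbF rv gv).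
- move=> i iF /brog_colour_Blue[nri ngi ij] k kF; split.
  + by move/brog_colour_Red; apply: blue_red_ge0.
  + by move/brog_colour_Green; apply: blue_green_le0.
- move=> i _ /brog_colour_Orange[nrj ngj ij] k kF; subst i; split.
  + by move/brog_colour_Green; apply: orange_green_ge0.
  + by move/brog_colour_Red; apply: orange_red_le0.
- move=> i k iF _ /brog_colour_Blue[nri ngi ij] /brog_colour_Orange[nrj ngj kj].
  by subst k; apply: blue_orange_complementary.
Qed.

End BrogCriterion.

Theorem mainTheorem13 (V : finType) (B : V -> V -> int) (F : {set V}) (j : V) :
  qskew B -> qcomplete B F -> #|F| = 2%N ->
  cycle_preserving B F j -> ~ vortex_apex B F j ->
  brog (mutate j B) F.
Proof.
move=> skB complB F2 [jF cpj] nvj.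
apply: (brog_criterion (j := j)) => //.
- exact: qskew_mutate.
- exact: qcomplete_mutate.
- exact: mutate_path_closes.
- move=> a b c; exact: mutate_no_one_sided_cycle.
Qed.
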